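(* Consider the setting and algorithm described in the context and assume (A1), (A2), (A3). Given a time horizon $K>0$, a node $i_0\in\{1,\dots,N\}$ and a privacy level $\epsilon_{i_0}>0$, the algorithm run for $K$ iterations preserves $\epsilon_{i_0}$-differential privacy for node $i_0$'s objective function if $$\sum_{k=1}^K\sqrt d\Big(\frac1{\alpha u_{e,i_0}}+\frac1{u_{w,i_0}}\Big)\frac{\alpha\delta}{r_{i_0}^k(1-\alpha\bar M)}\le\epsilon_{i_0}.$$
   Context: Problem. Let $\mathcal G=(\mathcal V,\mathcal E)$ be a connected undirected graph with $\mathcal V=\{1,\dots,N\}$. Each node $i$ holds a differentiable $f_i:\mathbb R^d\to\mathbb R$. (A1) Each $\nabla f_i$ is $M_i$-Lipschitz; $\bar M=\max_iM_i$. (A2) $f=\sum_if_i$ satisfies $\inf f>-\infty$. $\tilde f(\mathbf x)=\sum_if_i(x_i)$ for $\mathbf x=(x_1^{\mathsf T},\dots,x_N^{\mathsf T})^{\mathsf T}$. $\mathbf P\in\mathbb R^{N\times N}$ symmetric positive semidefinite with $p_{ij}=0$ if $i\ne j$, $\{i,j\}\notin\mathcal E$; $\mathbf L=\mathbf P\otimes\mathbf I_d$. (A3) $\mathrm{Null}(\mathbf L)=\{\mathbf x:x_1=\dots=x_N\}$. Algorithm. Parameters $\rho,\alpha,\beta>0$, a predetermined sequence $\eta^k\in(0,1)$, decay rates $r_i\in(0,1)$, scales $u_{e,i},u_{w,i}>0$. $\mathbf x^0$ arbitrary, $\mathbf d^0=\mathbf q^0=\mathbf 0$. At each $k$, independent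 noises $w_i^k,e_i^k\in\mathbb R^d$ with independent Laplace coordinates (density $\frac1{2\theta}e^{-|x|/\theta}$) of scales $r_i^ku_{w,i}$ and $r_i^ku_{e,i}$, stacked into $\mathbf w^k,\mathbf e^k$. Updates: $\mathbf y^k=\mathbf x^k+(1-\eta^k)\mathbf d^k+\mathbf w^k$, $\mathbf z^k=\nabla\tilde f(\mathbf x^k)+\eta^k\mathbf q^k+\rho\mathbf L\mathbf y^k+\mathbf e^k$, $\mathbf x^{k+1}=\mathbf x^k+\mathbf w^k-\alpha(\mathbf z^k-\mathbf e^k)+\beta\mathbf L\mathbf z^k$, $\mathbf d^{k+1}=\eta^k\mathbf d^k+\mathbf y^k$, $\mathbf q^{k+1}=\eta^k\mathbf q^k+\rho\mathbf L\mathbf y^k$. The observation available to an eavesdropper is $\mathcal O=\{\mathbf y^k,\mathbf z^k\}_{k}$ (the transmitted quantities). $\delta$-adjacency: for $\delta>0$, two function sets $F^{(1)}=\{f_i^{(1)}\}_{i=1}^N$, $F^{(2)}=\{f_i^{(2)}\}_{i=1}^N$ (each satisfying the assumptions above) are $\delta$-adjacent if there is $i_0$ with $f_i^{(1)}=f_i^{(2)}$ for $i\ne i_0$ and $\sup_{x\in\mathbb R^d}\|\nabla f_{i_0}^{(1)}(x)-\nabla f_{i_0}^{(2)}(x)\|\le\delta$. $\epsilon$-differential privacy (for node $i_0$'s objective): for any $\delta$-adjacent $F^{(1)},F^{(2)}$ (differing at $i_0$) and any observation $\mathcal O$, $\mathbb P(F^{(1)}|\mathcal O)\le e^{\epsilon}\mathbb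 P(F^{(2)}|\mathcal O)$, where $\mathbb P(F^{(h)}|\mathcal O)$ is the probability of inferring $F^{(h)}$ from $\mathcal O$; concretely, with initialization, network and $\{\eta^k\}$ fixed, the observation is determined by the noise sequences, and $\mathbb P(F^{(h)}|\mathcal O)$ is the probability (density) of the noise sequences that produce $\mathcal O$ when the algorithm runs on $F^{(h)}$. *)

From HB Require Import structures.
From mathcomp Require Import all_boot all_order all_algebra.
From mathcomp Require Import all_classical all_reals all_analysis.
Set Implicit Arguments. Unset Strict Implicit. Unset Printing Implicit Defensive.
Import Order.TTheory GRing.Theory Num.Theory.
Local Open Scope ring_scope.

Section Defs.
Variable R : realType.

Definition dotv (d : nat) (u v : 'rV[R]_d) : R := \sum_(c < d) u 0 c * v 0 c.
Definition enorm (d : nat) (u : 'rV[R]_d) : R := Num.sqrt (dotv u u).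

Definition is_gradient (d : nat) (f : 'rV[R]_d -> R) (g : 'rV[R]_d -> 'rV[R]_d) :=
  forall x : 'rV[R]_d, forall eps : R, 0 < eps -> exists2 eta : R, 0 < eta &
    forall h : 'rV[R]_d, enorm h < eta ->
      `| f (x + h) - f x - dotv (g x) h | <= eps * enorm h.

Definition lipschitz (d : nat) (g : 'rV[R]_d -> 'rV[R]_d) (M : R) :=
  forall x y : 'rV[R]_d, enorm (g x - g y) <= M * enorm (x - y).

Definition valid_funset (N d : nat) (M : 'I_N -> R)
    (f : 'I_N -> 'rV[R]_d -> R) (g : 'I_N -> 'rV[R]_d -> 'rV[R]_d) :=
  [/\ (forall i, is_gradient (f i) (g i)),
      (forall i, lipschitz (g i) (M i)) &
      (exists m : R, forall x : 'rV[R]_d, m <= \sum_(i < N) f i x)].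

Definition adjacent (N d : nat) (delta : R) (i0 : 'I_N)
    (f1 f2 : 'I_N -> 'rV[R]_d -> R) (g1 g2 : 'I_N -> 'rV[R]_d -> 'rV[R]_d) :=
  (forall i, i != i0 -> f1 i = f2 i /\ g1 i = g2 i) /\
  (forall x : 'rV[R]_d, enorm (g1 i0 x - g2 i0 x) <= delta).

(* Stacked states: an N x d matrix whose i-th row is x_i.
   With this layout, L x = (P (x) I_d) x is the matrix product P *m X. *)
Definition stack_grad (N d : nat) (g : 'I_N -> 'rV[R]_d -> 'rV[R]_d)
    (X : 'M[R]_(N, d)) : 'M[R]_(N, d) :=
  \matrix_(i < N, c < d) g i (row i X) 0 c.

Fixpoint alg_state (N d : nat) (P : 'M[R]_N) (rho alpha beta : R) (eta : nat -> R)
    (g : 'I_N -> 'rV[R]_d -> 'rV[R]_d) (x0 : 'M[R]_(N, d))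
    (w e : nat -> 'M[R]_(N, d)) (k : nat)
    : 'M[R]_(N, d) * 'M[R]_(N, d) * 'M[R]_(N, d) :=
  match k with
  | 0 => (x0, 0, 0)
  | k'.+1 =>
      let: (x, dd, q) := alg_state P rho alpha beta eta g x0 w e k' in
      let y := x + (1 - eta k') *: dd + w k' in
      let z := stack_grad g x + eta k' *: q + rho *: (P *m y) + e k' in
      (x + w k' - alpha *: (z - e k') + beta *: (P *m z),
       eta k' *: dd + y,
       eta k' *: q + rho *: (P *m y))
  end.

Definition alg_y (N d : nat) (P : 'M[R]_N) (rho alpha beta : R) (eta : nat -> R)
    (g : 'I_N -> 'rV[R]_d -> 'rV[R]_d) (x0 : 'M[R]_(N, d))
    (w e : nat -> 'M[R]_(N, d)) (k : nat) : 'M[R]_(N, d) :=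
  let: (x, dd, q) := alg_state P rho alpha beta eta g x0 w e k in
  x + (1 - eta k) *: dd + w k.

Definition alg_z (N d : nat) (P : 'M[R]_N) (rho alpha beta : R) (eta : nat -> R)
    (g : 'I_N -> 'rV[R]_d -> 'rV[R]_d) (x0 : 'M[R]_(N, d))
    (w e : nat -> 'M[R]_(N, d)) (k : nat) : 'M[R]_(N, d) :=
  let: (x, dd, q) := alg_state P rho alpha beta eta g x0 w e k in
  let y := x + (1 - eta k) *: dd + w k in
  stack_grad g x + eta k *: q + rho *: (P *m y) + e k.

Definition produces (N d : nat) (P : 'M[R]_N) (rho alpha beta : R) (eta : nat -> R)
    (g : 'I_N -> 'rV[R]_d -> 'rV[R]_d) (x0 : 'M[R]_(N, d)) (K : nat)
    (w e : nat -> 'M[R]_(N, d)) (Y Z : nat -> 'M[R]_(N, d)) :=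
  forall k, (k < K)%N ->
    alg_y P rho alpha beta eta g x0 w e k = Y k /\
    alg_z P rho alpha beta eta g x0 w e k = Z k.

Definition laplace (theta v : R) : R := expR (- `|v| / theta) / (2 * theta).

Definition noise_density (N d : nat) (r uw ue : 'I_N -> R) (K : nat)
    (w e : nat -> 'M[R]_(N, d)) : R :=
  \prod_(k < K) \prod_(i < N) \prod_(c < d)
    (laplace (r i ^+ k * uw i) (w k i c) * laplace (r i ^+ k * ue i) (e k i c)).

(* epsilon-differential privacy of node i0's objective, for the algorithm run
   K iterations: for every delta-adjacent pair of function sets differing at i0
   and every observation O, P(F1 | O) <= e^eps P(F2 | O), where P(F | O) is the
   density of the noise sequences producing O on F. *)
Definition diff_private (N d : nat) (M : 'I_N -> R) (P : 'M[R]_N)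
    (rho alpha beta : R) (eta : nat -> R) (r uw ue : 'I_N -> R)
    (x0 : 'M[R]_(N, d)) (K : nat) (delta : R) (i0 : 'I_N) (eps : R) :=
  forall (f1 f2 : 'I_N -> 'rV[R]_d -> R) (g1 g2 : 'I_N -> 'rV[R]_d -> 'rV[R]_d),
    valid_funset M f1 g1 -> valid_funset M f2 g2 ->
    adjacent delta i0 f1 f2 g1 g2 ->
    forall (Y Z : nat -> 'M[R]_(N, d)) (w1 e1 : nat -> 'M[R]_(N, d)),
      produces P rho alpha beta eta g1 x0 K w1 e1 Y Z ->
      (exists w2 e2, produces P rho alpha beta eta g2 x0 K w2 e2 Y Z) /\
      (forall w2 e2, produces P rho alpha beta eta g2 x0 K w2 e2 Y Z ->
         noise_density r uw ue K w1 e1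
           <= expR eps * noise_density r uw ue K w2 e2).

End Defs.

From Pilot Require Import Defs.
From HB Require Import structures.
From mathcomp Require Import all_boot all_order all_algebra.
From mathcomp Require Import all_classical all_reals all_analysis.
From mathcomp Require Import ring lra.
Import Order.TTheory GRing.Theory Num.Theory.
Set Implicit Arguments. Unset Strict Implicit. Unset Printing Implicit Defensive.
Local Open Scope ring_scope.

(* Since y^k and z^k contain w^k and e^k with coefficient one, the noises
   producing the same observation on the adjacent gradients g2 are unique: they are
   w2^k = w1^k + x1^k - x2^k and e2^k = e1^k + grad1(x1^k) - grad2(x2^k) along the shadow
   trajectory x2^{k+1} = x1^{k+1} + alpha (grad1(x1^k) - grad2(x2^k)), while both runs share
   d^k and q^k.  Only node i0 drifts, and by the Lipschitz bound its drift never exceeds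
   the fixed point B = alpha delta / (1 - alpha Mbar) of t |-> alpha (Mbar t + delta).  So
   at node i0 the noises differ by at most sqrt d B and sqrt d B / alpha in l1 norm, and
   comparing the Laplace densities coordinatewise bounds their ratio by the exponential of
   the budget; the budget indexes iterations from 1, which only enlarges it as r_i0 < 1. *)

Lemma sum_CauchySchwarz (R : realDomainType) (I : finType) (a b : I -> R) :
  (\sum_i a i * b i) ^+ 2 <= (\sum_i a i ^+ 2) * (\sum_i b i ^+ 2).
Proof.
set A := \sum_i a i ^+ 2; set B := \sum_i b i ^+ 2; set C := \sum_i a i * b i.
have A_ge0 : 0 <= A by apply: sumr_ge0 => i _; exact: sqr_ge0.
have [A0 | A_gt0] := eqVneq A 0.
  have a0 i : a i = 0.
    move/eqP: A0; rewrite psumr_eq0 => [/allP/(_ i (mem_index_enum _))|j _].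
      by rewrite sqrf_eq0 => /eqP.
    exact: sqr_ge0.
  have -> : C = 0 by rewrite /C big1 // => i _; rewrite a0 mul0r.
  by rewrite expr0n /= A0 mul0r.
(* the sum below expands to A (A B - C^2) *)
have : 0 <= \sum_i (A * b i - C * a i) ^+ 2 by apply: sumr_ge0 => i _; exact: sqr_ge0.
have expand i : (A * b i - C * a i) ^+ 2 =
    A ^+ 2 * b i ^+ 2 - (2 * A * C) * (a i * b i) + C ^+ 2 * a i ^+ 2 by ring.
rewrite (eq_bigr _ (fun i _ => expand i)) big_split sumrB /= -!mulr_sumr -/A -/B -/C.
have -> : A ^+ 2 * B - 2 * A * C * C + C ^+ 2 * A = A * (A * B - C ^+ 2) by ring.
by rewrite pmulr_rge0 ?lt_def ?A_gt0 // subr_ge0.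
Qed.

Section EuclideanNorm.
Variables (R : realType) (d : nat).
Implicit Types u v : 'rV[R]_d.

Lemma dotv_ge0 u : 0 <= dotv u u.
Proof. by apply: sumr_ge0 => c _; rewrite -expr2 sqr_ge0. Qed.

Lemma enorm_ge0 u : 0 <= enorm u.
Proof. exact: sqrtr_ge0. Qed.

Lemma sqr_enorm u : enorm u ^+ 2 = dotv u u.
Proof. exact/sqr_sqrtr/dotv_ge0. Qed.

Lemma dotv_le u v : dotv u v <= enorm u * enorm v.
Proof.
rewrite -sqrtrM ?dotv_ge0 // (le_trans (ler_norm _)) // -sqrtr_sqr.
rewrite ler_sqrt ?mulr_ge0 ?dotv_ge0 // /dotv.
under [X in _ <= X * _]eq_bigr do rewrite -expr2.
under [X in _ <= _ * X]eq_bigr do rewrite -expr2.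
exact: sum_CauchySchwarz.
Qed.

Lemma enormD u v : enorm (u + v) <= enorm u + enorm v.
Proof.
rewrite -(ler_pXn2r (_ : 0 < 2)%N) ?nnegrE ?addr_ge0 ?enorm_ge0 //.
have -> : enorm (u + v) ^+ 2 = enorm u ^+ 2 + 2 * dotv u v + enorm v ^+ 2.
  rewrite !sqr_enorm /dotv mulr_sumr -!big_split /=.
  by apply: eq_bigr => c _; rewrite !mxE; ring.
have := dotv_le u v; nra.
Qed.

Lemma enormZ a u : enorm (a *: u) = `|a| * enorm u.
Proof.
rewrite /enorm -sqrtr_sqr -sqrtrM ?sqr_ge0 // /dotv mulr_sumr.
by congr Num.sqrt; apply: eq_bigr => c _; rewrite !mxE; ring.
Qed.

Lemma enorm0 : enorm (0 : 'rV[R]_d) = 0.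
Proof. by rewrite -(scale0r 0) enormZ normr0 mul0r. Qed.

Lemma enormN u : enorm (- u) = enorm u.
Proof. by rewrite -scaleN1r enormZ normrN1 mul1r. Qed.

Lemma enorm_distC u v : enorm (u - v) = enorm (v - u).
Proof. by rewrite -enormN opprB. Qed.

Lemma sum_normr_le_enorm u : \sum_c `|u 0 c| <= Num.sqrt d%:R * enorm u.
Proof.
rewrite -sqrtrM ?ler0n // -(ger0_norm (sumr_ge0 _ (fun c _ => normr_ge0 (u 0 c)))).
rewrite -sqrtr_sqr ler_sqrt ?mulr_ge0 ?ler0n ?dotv_ge0 //.
have := sum_CauchySchwarz (fun c => `|u 0 c|) (fun=> 1 : R).
under eq_bigr do rewrite mulr1.
rewrite (eq_bigr (fun=> 1) (fun c _ => expr1n _ _)) sumr_const card_ord mulrC.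
rewrite (_ : \sum_c `|u 0 c| ^+ 2 = dotv u u) //.
by apply: eq_bigr => c _; rewrite real_normK ?num_real // expr2.
Qed.

Lemma lipschitz_ge0 (g : 'rV[R]_d -> 'rV[R]_d) M :
  (0 < d)%N -> Defs.lipschitz g M -> 0 <= M.
Proof.
move=> d_gt0 /(_ (const_mx 1) 0); rewrite subr0 => lip.
have one_gt0 : 0 < enorm (const_mx 1 : 'rV[R]_d).
  rewrite sqrtr_gt0 /dotv (eq_bigr (fun=> 1)) => [|c _]; last by rewrite !mxE mulr1.
  by rewrite sumr_const card_ord ltr0n.
by rewrite -(pmulr_lge0 _ one_gt0) (le_trans (enorm_ge0 _) lip).
Qed.

Lemma lipschitzW (g : 'rV[R]_d -> 'rV[R]_d) M M' :
  M <= M' -> Defs.lipschitz g M -> Defs.lipschitz g M'.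
Proof. by move=> le_MM' lip x y; rewrite (le_trans (lip x y)) ?ler_wpM2r ?enorm_ge0. Qed.

Lemma enorm_perturbed_lipschitz (g1 g2 : 'rV[R]_d -> 'rV[R]_d) M delta u v :
  Defs.lipschitz g1 M -> (forall x, enorm (g1 x - g2 x) <= delta) ->
  enorm (g1 u - g2 v) <= M * enorm (v - u) + delta.
Proof.
move=> lip close; rewrite -(subrK (g1 v) (g1 u)) -addrA.
by rewrite (le_trans (enormD _ _)) // lerD // enorm_distC lip.
Qed.

End EuclideanNorm.

Section LaplaceNoise.
Variable R : realType.

Lemma laplace_ge0 (theta v : R) : 0 < theta -> 0 <= laplace theta v.
Proof. by move=> theta_gt0; rewrite divr_ge0 ?expR_ge0 ?mulr_ge0 ?ltW. Qed.

Lemma laplace_shift_le (theta a b : R) : 0 < theta ->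
  laplace theta a <= expR (`|a - b| / theta) * laplace theta b.
Proof.
move=> theta_gt0; rewrite /laplace mulrA -expRD ler_pM2r ?invr_gt0 ?mulr_gt0 //.
rewrite ler_expR -mulrDl ler_pM2r ?invr_gt0 //.
have := lerB_dist b a; rewrite distrC; lra.
Qed.

Lemma ler_prod_expR (I : finType) (F G c : I -> R) :
  (forall j, 0 <= F j) -> (forall j, F j <= expR (c j) * G j) ->
  \prod_j F j <= expR (\sum_j c j) * \prod_j G j.
Proof.
move=> F_ge0 FG; rewrite expR_sum -big_split /=.
by apply: ler_prod => j _; rewrite F_ge0 FG.
Qed.

Variables (N d : nat) (r uw ue : 'I_N -> R) (K : nat).
Hypotheses (r_gt0 : forall i, 0 < r i) (uw_gt0 : forall i, 0 < uw i)
  (ue_gt0 : forall i, 0 < ue i).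

Let scale_gt0 (u : 'I_N -> R) i k : (forall i, 0 < u i) -> 0 < r i ^+ k * u i.
Proof. by move=> u_gt0; rewrite mulr_gt0 ?exprn_gt0. Qed.

Lemma noise_density_ge0 (w e : nat -> 'M[R]_(N, d)) :
  0 <= noise_density r uw ue K w e.
Proof.
apply: prodr_ge0 => k _; apply: prodr_ge0 => i _; apply: prodr_ge0 => c _.
by rewrite mulr_ge0 ?laplace_ge0 ?scale_gt0.
Qed.

Lemma noise_density_shift_le (w1 e1 w2 e2 : nat -> 'M[R]_(N, d)) :
  noise_density r uw ue K w1 e1 <=
  expR (\sum_(k < K) \sum_(i < N) \sum_(c < d)
          (`|w1 k i c - w2 k i c| / (r i ^+ k * uw i)
           + `|e1 k i c - e2 k i c| / (r i ^+ k * ue i)))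
  * noise_density r uw ue K w2 e2.
Proof.
apply: ler_prod_expR => [k|k].
  apply: prodr_ge0 => i _; apply: prodr_ge0 => c _.
  by rewrite mulr_ge0 ?laplace_ge0 ?scale_gt0.
apply: ler_prod_expR => [i|i].
  by apply: prodr_ge0 => c _; rewrite mulr_ge0 ?laplace_ge0 ?scale_gt0.
apply: ler_prod_expR => [c|c]; first by rewrite mulr_ge0 ?laplace_ge0 ?scale_gt0.
have shift_w := laplace_shift_le (w1 k i c) (w2 k i c) (scale_gt0 i k uw_gt0).
have shift_e := laplace_shift_le (e1 k i c) (e2 k i c) (scale_gt0 i k ue_gt0).
apply: le_trans (ler_pM (laplace_ge0 _ _) (laplace_ge0 _ _) shift_w shift_e) _;
  rewrite ?scale_gt0 //.
by rewrite expRD mulrACA.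
Qed.

Lemma noise_density_dim0 (w e : nat -> 'M[R]_(N, 0)) :
  noise_density r uw ue K w e = 1.
Proof. by rewrite /noise_density big1 // => k _; rewrite big1 // => i _; rewrite big_ord0. Qed.

Lemma noise_density_eq (w e w' e' : nat -> 'M[R]_(N, d)) :
  (forall k, (k < K)%N -> w k = w' k /\ e k = e' k) ->
  noise_density r uw ue K w e = noise_density r uw ue K w' e'.
Proof. by move=> same; apply: eq_bigr => k _; have [-> ->] := same k (ltn_ord k). Qed.

End LaplaceNoise.

Section Algorithm.
Variables (R : realType) (N d : nat) (P : 'M[R]_N) (rho alpha beta : R)
  (eta : nat -> R) (x0 : 'M[R]_(N, d)).
Implicit Types g : 'I_N -> 'rV[R]_d -> 'rV[R]_d.

Local Notation state g w e k := (alg_state P rho alpha beta eta g x0 w e k).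
Local Notation obs_y g w e k := (alg_y P rho alpha beta eta g x0 w e k).
Local Notation obs_z g w e k := (alg_z P rho alpha beta eta g x0 w e k).

Lemma rowB (A1 A2 : 'M[R]_(N, d)) i : row i (A1 - A2) = row i A1 - row i A2.
Proof. exact: linearB. Qed.

Lemma row_stack_grad g X i : row i (stack_grad g X) = g i (row i X).
Proof. by apply/rowP => c; rewrite !mxE. Qed.

Lemma sum_normr_row_le (A1 A2 : 'M[R]_(N, d)) i :
  \sum_c `|A1 i c - A2 i c| <= Num.sqrt d%:R * enorm (row i (A1 - A2)).
Proof.
have -> : \sum_c `|A1 i c - A2 i c| = \sum_c `|row i (A1 - A2) 0 c|.
  by apply: eq_bigr => c _; rewrite !mxE.
exact: sum_normr_le_enorm.
Qed.

Lemma alg_noise_determined g wa ea wb eb k :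
  state g wa ea k = state g wb eb k ->
  obs_y g wa ea k = obs_y g wb eb k -> obs_z g wa ea k = obs_z g wb eb k ->
  [/\ wa k = wb k, ea k = eb k & state g wa ea k.+1 = state g wb eb k.+1].
Proof.
rewrite /alg_y /alg_z /= => ->.
case: (state g wb eb k) => [[x dd] q] /addrI w_eq; rewrite w_eq => /addrI e_eq.
by rewrite e_eq.
Qed.

Lemma produces_noise_unique g K wa ea wb eb Y Z :
  produces P rho alpha beta eta g x0 K wa ea Y Z ->
  produces P rho alpha beta eta g x0 K wb eb Y Z ->
  forall k, (k < K)%N -> wa k = wb k /\ ea k = eb k.
Proof.
move=> prod_a prod_b.
have step k : (k < K)%N -> state g wa ea k = state g wb eb k ->
    [/\ wa k = wb k, ea k = eb k & state g wa ea k.+1 = state g wb eb k.+1].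
  move=> lt_kK eq_k; have [ya za] := prod_a k lt_kK; have [yb zb] := prod_b k lt_kK.
  by apply: alg_noise_determined; rewrite ?ya ?yb ?za ?zb.
have states k : (k <= K)%N -> state g wa ea k = state g wb eb k.
  by elim: k => [//|k IH] lt_kK; case: (step k lt_kK (IH (ltnW lt_kK))).
by move=> k lt_kK; case: (step k lt_kK (states k (ltnW lt_kK))).
Qed.

Section Shadow.
Variables (g1 g2 : 'I_N -> 'rV[R]_d -> 'rV[R]_d) (w1 e1 : nat -> 'M[R]_(N, d)).
Local Notation x1 k := (state g1 w1 e1 k).1.1.

Fixpoint shadow_x k : 'M[R]_(N, d) :=
  if k is k'.+1
  then x1 k + alpha *: (stack_grad g1 (x1 k') - stack_grad g2 (shadow_x k'))
  else x0.

Definition shadow_w k := w1 k + x1 k - shadow_x k.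
Definition shadow_e k := e1 k + stack_grad g1 (x1 k) - stack_grad g2 (shadow_x k).

Lemma shadow_y_eq k (D : 'M[R]_(N, d)) :
  shadow_x k + D + shadow_w k = x1 k + D + w1 k.
Proof. by apply/matrixP => i j; rewrite !mxE; ring. Qed.

Lemma shadow_z_eq k (Q Y : 'M[R]_(N, d)) :
  stack_grad g2 (shadow_x k) + Q + Y + shadow_e k =
  stack_grad g1 (x1 k) + Q + Y + e1 k.
Proof. by apply/matrixP => i j; rewrite !mxE; ring. Qed.

Lemma shadow_state k :
  state g2 shadow_w shadow_e k =
  (shadow_x k, (state g1 w1 e1 k).1.2, (state g1 w1 e1 k).2).
Proof.
elim: k => [//|k IH]; rewrite [LHS]/= IH [shadow_x _]/= /=.
rewrite shadow_y_eq shadow_z_eq /shadow_w /shadow_e.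
case: (state g1 w1 e1 k) => [[x dd] q] /=; congr (_, _, _).
by apply/matrixP => i j; rewrite !mxE; ring.
Qed.

Lemma produces_shadow K Y Z :
  produces P rho alpha beta eta g1 x0 K w1 e1 Y Z ->
  produces P rho alpha beta eta g2 x0 K shadow_w shadow_e Y Z.
Proof.
move=> prod1 k /prod1 [<- <-]; rewrite /alg_y /alg_z shadow_state.
by rewrite shadow_y_eq shadow_z_eq; case: (state g1 w1 e1 k) => [[x dd] q].
Qed.

Section Drift.
Variables (i0 : 'I_N) (Mb delta : R).
Hypotheses (alpha_gt0 : 0 < alpha) (Mb_ge0 : 0 <= Mb) (alphaMb_lt1 : alpha * Mb < 1)
  (delta_ge0 : 0 <= delta) (lip : Defs.lipschitz (g1 i0) Mb)
  (same_g : forall i, i != i0 -> g1 i = g2 i)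
  (close_g : forall x, enorm (g1 i0 x - g2 i0 x) <= delta).

Local Notation B := (alpha * delta / (1 - alpha * Mb)).

Lemma drift_bound_ge0 : 0 <= B.
Proof. by rewrite divr_ge0 ?mulr_ge0 ?subr_ge0 // ltW. Qed.

Lemma drift_bound_fixpoint : alpha * (Mb * B + delta) = B.
Proof. by field; rewrite subr_eq0 eq_sym lt_eqF. Qed.

Lemma shadow_driftS k i :
  row i (shadow_x k.+1 - x1 k.+1) =
  alpha *: (g1 i (row i (x1 k)) - g2 i (row i (shadow_x k))).
Proof. by rewrite /= addrAC subrr add0r; apply/rowP => c; rewrite !mxE. Qed.

Lemma shadow_drift k :
  (forall i, i != i0 -> row i (shadow_x k - x1 k) = 0) /\
  enorm (row i0 (shadow_x k - x1 k)) <= B.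
Proof.
elim: k => [|k [IHrows IHi0]].
  by split=> [i _|]; rewrite /= subrr row0 ?enorm0 ?drift_bound_ge0.
split=> [i ne_ii0|]; rewrite shadow_driftS.
  move/eqP: (IHrows i ne_ii0); rewrite rowB subr_eq0 => /eqP->.
  by rewrite same_g // subrr scaler0.
rewrite enormZ (ger0_norm (ltW alpha_gt0)) -drift_bound_fixpoint ler_pM2l //.
rewrite (le_trans (enorm_perturbed_lipschitz _ _ lip close_g)) // lerD2r.
by rewrite ler_wpM2l // -rowB.
Qed.

Lemma shadow_noise_off_i0 k i c : i != i0 ->
  w1 k i c = shadow_w k i c /\ e1 k i c = shadow_e k i c.
Proof.
move=> ne_ii0; have [drift_rows _] := shadow_drift k.
have row_eq : row i (shadow_x k) = row i (x1 k).
  by apply/eqP; rewrite -subr_eq0 -rowB drift_rows.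
have /rowP/(_ c) := row_eq; rewrite !mxE => entry_eq.
by rewrite /shadow_w /shadow_e row_eq entry_eq same_g // !addrK.
Qed.

Lemma shadow_noise_l1_i0 k :
  \sum_c `|w1 k i0 c - shadow_w k i0 c| <= Num.sqrt d%:R * B /\
  \sum_c `|e1 k i0 c - shadow_e k i0 c| <= Num.sqrt d%:R * (B / alpha).
Proof.
have [_ drift_i0] := shadow_drift k.
have w_diff : w1 k - shadow_w k = shadow_x k - x1 k.
  by rewrite /shadow_w opprB addrCA opprD addNKr.
have e_diff : row i0 (e1 k - shadow_e k) =
    g2 i0 (row i0 (shadow_x k)) - g1 i0 (row i0 (x1 k)).
  by rewrite /shadow_e opprB addrCA opprD addNKr rowB !row_stack_grad.
split; apply: le_trans (sum_normr_row_le _ _ _) _; rewrite ler_wpM2l ?sqrtr_ge0 //.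
  by rewrite w_diff.
have -> : B / alpha = Mb * B + delta.
  by rewrite -[in LHS]drift_bound_fixpoint mulrC mulKf ?lt0r_neq0.
rewrite e_diff enorm_distC.
rewrite (le_trans (enorm_perturbed_lipschitz _ _ lip close_g)) // lerD2r.
by rewrite ler_wpM2l // -rowB.
Qed.

Variables (r uw ue : 'I_N -> R) (K : nat).
Hypotheses (r_gt0 : forall i, 0 < r i) (uw_gt0 : forall i, 0 < uw i)
  (ue_gt0 : forall i, 0 < ue i).

Lemma noise_density_shadow_le :
  noise_density r uw ue K w1 e1 <=
  expR (\sum_(k < K) Num.sqrt d%:R * (1 / (alpha * ue i0) + 1 / uw i0)
                       * (alpha * delta / (r i0 ^+ k * (1 - alpha * Mb))))
  * noise_density r uw ue K shadow_w shadow_e.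
Proof.
apply: le_trans (noise_density_shift_le K r_gt0 uw_gt0 ue_gt0 w1 e1 shadow_w shadow_e) _.
rewrite ler_wpM2r ?noise_density_ge0 // ler_expR; apply: ler_sum => k _.
rewrite (bigD1 i0) //= [X in _ + X]big1 ?addr0 => [|i ne_ii0]; last first.
  apply: big1 => c _; have [-> ->] := shadow_noise_off_i0 k c ne_ii0.
  by rewrite !subrr normr0 !mul0r addr0.
have [w_l1 e_l1] := shadow_noise_l1_i0 k.
have rk_gt0 : 0 < r i0 ^+ k by rewrite exprn_gt0.
rewrite big_split /= -!mulr_suml.
have scale_inv_ge0 u : 0 < u -> 0 <= (r i0 ^+ k * u)^-1.
  by move=> u_gt0; rewrite invr_ge0 mulr_ge0 ?ltW.
apply: le_trans (lerD (ler_wpM2r (scale_inv_ge0 _ (uw_gt0 i0)) w_l1)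
                      (ler_wpM2r (scale_inv_ge0 _ (ue_gt0 i0)) e_l1)) _.
rewrite le_eqVlt; apply/orP; left; apply/eqP; field.
by rewrite !lt0r_neq0 ?subr_gt0 // mulr_gt0.
Qed.

End Drift.

End Shadow.
End Algorithm.

Lemma ler_div_exprS (R : realFieldType) (a b s : R) k :
  0 <= a -> 0 < b -> 0 < s <= 1 -> a / (s ^+ k * b) <= a / (s ^+ k.+1 * b).
Proof.
move=> a_ge0 b_gt0 /andP[s_gt0 s_le1].
rewrite ler_wpM2l // lef_pV2 ?posrE ?mulr_gt0 ?exprn_gt0 // ler_wpM2r ?(ltW b_gt0) //.
by rewrite exprS ler_piMl // exprn_ge0 // ltW.
Qed.

Theorem theorem3 (R : realType) (N d : nat)
    (edge : rel 'I_N) (P : 'M[R]_N) (M : 'I_N -> R)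
    (rho alpha beta : R) (eta : nat -> R) (r uw ue : 'I_N -> R)
    (x0 : 'M[R]_(N, d)) (K : nat) (delta : R) (i0 : 'I_N) (eps : R) :
  (* connected undirected graph *)
  (forall i j, edge i j = edge j i) -> (forall i, ~~ edge i i) ->
  (forall i j, connect edge i j) ->
  (* P symmetric PSD, supported on the graph *)
  P^T = P -> (forall v : 'cV[R]_N, 0 <= (v^T *m P *m v) 0 0) ->
  (forall i j, i != j -> ~~ edge i j -> P i j = 0) ->
  (* (A3): Null(L) is the consensus subspace *)
  (forall X : 'M[R]_(N, d), P *m X = 0 <-> (forall i j, row i X = row j X)) ->
  (* parameters *)
  0 < rho -> 0 < alpha -> 0 < beta ->
  (forall k, 0 < eta k < 1) ->
  (forall i, 0 < r i < 1) -> (forall i, 0 < uw i) -> (forall i, 0 < ue i) ->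
  alpha * \big[Num.max/M i0]_(i < N) M i < 1 ->
  (0 < K)%N -> 0 < delta -> 0 < eps ->
  \sum_(1 <= k < K.+1)
     Num.sqrt (d%:R) * (1 / (alpha * ue i0) + 1 / uw i0)
       * (alpha * delta / (r i0 ^+ k * (1 - alpha * \big[Num.max/M i0]_(i < N) M i)))
    <= eps ->
  diff_private M P rho alpha beta eta r uw ue x0 K delta i0 eps.
Proof.
move=> _ _ _ _ _ _ _ _ alpha_gt0 _ _ r_bounds uw_gt0 ue_gt0 alphaM_lt1 _ delta_gt0 eps_gt0
  budget f1 f2 g1 g2 [_ lip1 _] _ [same_fg close_g] Y Z w1 e1 prod1.
have prod_shadow := produces_shadow g2 prod1.
split=> [|w2 e2 prod2]; first by do 2!eexists; exact: prod_shadow.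
rewrite (noise_density_eq r uw ue (produces_noise_unique prod2 prod_shadow)).
have [d0 | d_gt0] := posnP d.
  by subst d; rewrite !noise_density_dim0 mulr1 ltW // expR_gt1.
set Mb := \big[Num.max/M i0]_(i < N) M i in alphaM_lt1 budget.
have lipMb : Defs.lipschitz (g1 i0) Mb := lipschitzW (le_bigmax _ _ _) (lip1 i0).
have r_gt0 i : 0 < r i by case/andP: (r_bounds i).
apply: le_trans (noise_density_shadow_le P rho beta eta x0 w1 e1 alpha_gt0
  (lipschitz_ge0 d_gt0 lipMb) alphaM_lt1 (ltW delta_gt0) lipMb
  (fun i ne_ii0 => (same_fg i ne_ii0).2) close_g K r_gt0 uw_gt0 ue_gt0) _.
rewrite ler_wpM2r ?noise_density_ge0 // ler_expR (le_trans _ budget) //.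
rewrite big_add1 big_mkord; apply: ler_sum => k _; apply: ler_wpM2l.
  by rewrite mulr_ge0 ?sqrtr_ge0 // addr_ge0 // divr_ge0 // ltW // mulr_gt0.
apply: ler_div_exprS; first by rewrite mulr_ge0 // ltW.
  by rewrite subr_gt0.
by have /andP[-> /ltW->] := r_bounds i0.
Qed.
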